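(* Let $\lambda$ be an infinite cardinal. For every coloring $c:[\lambda^+]^2\to\lambda$ there exists a coloring $c^+:[\lambda^+]^2\to\lambda^+$ such that for every cardinal $\mu\le\lambda$ and every partition $p:[\lambda^+]^2\to\mu$: (1) if $c$ witnesses $\lambda^+\nrightarrow_p[\lambda^+]^2_\lambda$ then $c^+$ witnesses $\lambda^+\nrightarrow_p[\lambda^+]^2_{\lambda^+}$; (2) for every cardinal $\varkappa$, if $c$ witnesses $\lambda^+\nrightarrow_p[\varkappa\circledast\lambda^+]^2_\lambda$ then $c^+$ witnesses $\lambda^+\nrightarrow_p[\varkappa\circledast\lambda^+]^2_{\lambda^+}$.
   Context: $[\kappa]^2$ denotes the set of pairs $(\alpha,\beta)$ with $\alpha<\beta<\kappa$; a partition is any function $p:[\kappa]^2\to\mu$. Given $p:[\kappa]^2\to\mu$, a coloring $c:[\kappa]^2\to\theta$ witnesses $\kappa\nrightarrow_p[\kappa]^2_\theta$ iff for every $A\subseteq\kappa$ with $|A|=\kappa$ and every $\tau:\mu\to\theta$ there are $\alpha<\beta$ in $A$ with $c(\alpha,\beta)=\tau(p(\alpha,\beta))$. It witnesses $\kappa\nrightarrow_p[\varkappa\circledast\kappa]^2_\theta$ iff for every $A\subseteq\kappa$ with $|A|=\varkappa$, every $B\subseteq\kappa$ with $|B|=\kappa$, and every $\tau:\mu\to\theta$ there are $\alpha\in A$ and $\beta\in B$ with $\alpha<\beta$ and $c(\alpha,\beta)=\tau(p(\alpha,\beta))$. *)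

From HB Require Import structures.
From mathcomp Require Import all_boot.
From mathcomp Require Import boolp classical_sets cardinality.
Set Implicit Arguments. Unset Strict Implicit. Unset Printing Implicit Defensive.

Local Open Scope classical_set_scope.

(* A cardinal is represented by a type (up to bijection).
   [strict_well_order lt] : lt is a strict total well-ordering of K. *)
Definition strict_well_order (K : Type) (lt : K -> K -> Prop) : Prop :=
  [/\ well_founded lt,
      (forall a b c, lt a b -> lt b c -> lt a c),
      (forall a, ~ lt a a) &
      (forall a b, [\/ lt a b, a = b | lt b a])].

(* (K, lt) is (order-isomorphic to) the ordinal lambda^+ where lambda = |L|:
   a well-order of size > lambda all of whose proper initial segments
   have size <= lambda. *)
Definition is_successor_ordinal_of (L K : Type) (lt : K -> K -> Prop) : Prop :=
  [/\ strict_well_order lt,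
      ~ card_le [set: K] [set: L] &
      (forall b : K, card_le [set a | lt a b] [set: L])].

(* c witnesses  kappa -/->_p [kappa]^2_theta  where kappa = (K,lt),
   p : [kappa]^2 -> M, c : [kappa]^2 -> C (theta = |C|).
   Colorings on pairs are given as binary functions; only values on
   pairs a < b matter. *)
Definition witnesses_sq (K M C : Type) (lt : K -> K -> Prop)
    (p : K -> K -> M) (c : K -> K -> C) : Prop :=
  forall A : set K, card_eq A [set: K] ->
  forall tau : M -> C,
  exists a b, [/\ A a, A b, lt a b & c a b = tau (p a b)].

(* c witnesses  kappa -/->_p [varkappa circledast kappa]^2_theta, varkappa = |X|. *)
Definition witnesses_circ (K M C X : Type) (lt : K -> K -> Prop)
    (p : K -> K -> M) (c : K -> K -> C) : Prop :=
  forall A B : set K, card_eq A [set: X] -> card_eq B [set: K] ->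
  forall tau : M -> C,
  exists a b, [/\ A a, B b, lt a b & c a b = tau (p a b)].

(* Write lambda = |L| and lambda^+ = (K, lt).  Fix an injective pairing
   [pair : L * L -> L] and, for every b, an injection [code b] of the initial
   segment below b into L, with left inverse [decode b], and set
     c^+(a, b) := decode (decode b i) j   where   c(a, b) = pair (i, j).
   Given tau from mu <= lambda colours into lambda^+, regularity of lambda^+
   bounds all values of tau by some eps.  In any set B of size lambda^+,
   lambda^+ many b > eps give eps the same code i, and for such b the equation
   c(a, b) = pair (i, code eps (tau m)) forces c^+(a, b) = tau m.  Hence the
   hypothesis on c, applied to this subset of B and to the colouring
   m |-> pair (i, code eps (tau m)), yields the pair required for c^+.
   Besides regularity, the cardinal arithmetic used is comparability of
   cardinals and |X * X| = |X| for infinite X, both obtained from Zorn's lemma. *)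

From HB Require Import structures.
From mathcomp Require Import all_boot.
From mathcomp Require Import boolp classical_sets functions cardinality.
Set Implicit Arguments. Unset Strict Implicit. Unset Printing Implicit Defensive.
Local Open Scope classical_set_scope.
Local Open Scope card_scope.

Lemma card_le_injP T U (u0 : U) (A : set T) (B : set U) :
  A #<= B <-> exists2 f : T -> U, set_fun A B f & set_inj A f.
Proof.
elim/Ppointed: U => U in u0 B *; first by case: (no u0).
by rewrite -injfunPex; split => /pcard_leP.
Qed.

Lemma card_eq_bijP T U (u0 : U) (A : set T) (B : set U) :
  A #= B <-> exists f : T -> U, set_bij A B f.
Proof.
elim/Ppointed: U => U in u0 B *; first by case: (no u0).
by rewrite -bijPex; split => /pcard_eqP.
Qed.

Lemma card_le_inj T U (A : set T) (B : set U) (f : T -> U) :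
  set_fun A B f -> set_inj A f -> A #<= B.
Proof.
move=> fAB finj; apply/card_subP; exists (f @` A); first exact: inj_card_eq.
by move=> _ [x Ax <-]; exact: fAB.
Qed.

Lemma chain_bigcup_common T (F : set (set T)) x y : total_on F subset ->
  (\bigcup_(G in F) G) x -> (\bigcup_(G in F) G) y -> exists2 G, F G & G x /\ G y.
Proof.
move=> Ftot [G1 F1 G1x] [G2 F2 G2y].
have [G12|G21] := Ftot G1 G2 F1 F2; first by exists G2 => //; split => //; exact: G12.
by exists G1 => //; split => //; exact: G21.
Qed.

Definition matching T U (A : set T) (B : set U) (G : set (T * U)) :=
  G `<=` A `*` B /\ forall a a' b b', G (a, b) -> G (a', b') -> (a = a' <-> b = b').

Lemma matching_card_le T U (A : set T) (B : set U) (G : set (T * U)) :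
  matching A B G -> (forall a, A a -> exists b, G (a, b)) -> A #<= B.
Proof.
move=> [GAB Gmatch] Gtotal.
have [->|/set0P[a0 /Gtotal[b0 _]]] := eqVneq A set0; first exact: card_ge0.
have /choice[f fG] : forall a, exists b, A a -> G (a, b).
  move=> a; have [/Gtotal[b Gab]|nAa] := pselect (A a); first by exists b.
  by exists b0 => /nAa.
apply: (card_le_inj (f := f)) => [a /fG /GAB /= [] //|a a' /set_mem Aa /set_mem Aa' fE].
exact/(Gmatch _ _ _ _ (fG a Aa) (fG a' Aa')).
Qed.

Lemma card_le_total T U (A : set T) (B : set U) : A #<= B \/ B #<= A.
Proof.
have [G [Gm Gmax]] : exists G, matching A B G /\ forall G', G `<` G' -> ~ matching A B G'.
  apply: Zorn_bigcup => F Fm Ftot; split.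
    by move=> q [G FG Gq]; exact: (Fm G FG).1.
  move=> a a' b b' Uab Uab'; have [G FG [Gab Gab']] := chain_bigcup_common Ftot Uab Uab'.
  exact: (Fm G FG).2.
have [GAB Gmatch] := Gm.
have [Adom|/existsNP[a /not_implyP[Aa /forallNP aN]]] :=
  pselect (forall a, A a -> exists b, G (a, b)).
  by left; exact: matching_card_le Gm Adom.
have [Bdom|/existsNP[b /not_implyP[Bb /forallNP bN]]] :=
  pselect (forall b, B b -> exists a, G (a, b)); last first.
  exfalso; apply: (Gmax (G `|` [set (a, b)])).
    split; first by move=> q Gq; left.
    by move=> /(_ (a, b) (or_intror erefl)); exact: aN.
  split; first by move=> q [/GAB//|->].
  move=> x x' y y' [Gxy|[-> ->]] [Gxy'|[-> ->]]; first exact: Gmatch.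
  - by split=> E; [case: (aN y); rewrite -E|case: (bN x); rewrite -E].
  - by split=> E; [case: (aN y'); rewrite E|case: (bN x'); rewrite E].
  - by [].
right; apply: (matching_card_le (G := [set q | G (q.2, q.1)])) => //.
split; first by move=> [y x] /GAB[].
by move=> y y' x x' /= Gxy Gxy'; split => E; apply/(Gmatch _ _ _ _ Gxy Gxy').
Qed.

Lemma card_le_neq0 T U (A : set T) (B : set U) : A #<= B -> A !=set0 -> B !=set0.
Proof.
move=> AB /set0P An0; apply/set0P; apply: contraNneq An0 => B0.
by move: AB; rewrite B0 => /card_le0P ->.
Qed.

Lemma card_le_setX T T' U U' (A : set T) (A' : set U) (B : set T') (B' : set U') :
  A #<= A' -> B #<= B' -> A `*` B #<= A' `*` B'.
Proof.
have [->|/set0P An0] := eqVneq A set0; first by rewrite set0X => _ _; exact: card_ge0.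
have [->|/set0P Bn0] := eqVneq B set0; first by rewrite setX0 => _ _; exact: card_ge0.
move=> AA' BB'; have [u0 _] := card_le_neq0 AA' An0.
have [u0' _] := card_le_neq0 BB' Bn0.
have [f fA finj] := (card_le_injP u0 A A').1 AA'.
have [g gB ginj] := (card_le_injP u0' B B').1 BB'.
apply: (card_le_inj (f := fun q => (f q.1, g q.2))) => [[x y] [/fA ? /gB ?]//|].
move=> [x y] [x' y'] /set_mem[Ax By] /set_mem[Ax' By'] [fE gE].
by rewrite (finj x x' (mem_set Ax) (mem_set Ax') fE)
  (ginj y y' (mem_set By) (mem_set By') gE).
Qed.

Lemma finite_card_le_infinite T U (A : set T) (B : set U) :
  finite_set A -> infinite_set B -> A #<= B.
Proof. by move=> /finite_set_countable + /infiniteP; exact: card_le_trans. Qed.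

Lemma card_bigcup_le I T U (D : set I) (F : I -> set T) (C : set U) :
  C `*` C #<= C -> D #<= C -> (forall i, D i -> F i #<= C) ->
  \bigcup_(i in D) F i #<= C.
Proof.
have [->|/set0P[x0 [i0 Di0 Fx0]]] := eqVneq (\bigcup_(i in D) F i) set0.
  by move=> *; exact: card_ge0.
move=> CC DC FC; have [u0 _] := card_le_neq0 (FC i0 Di0) (ex_intro _ x0 Fx0).
have /choice[idx idxP] : forall x, exists i, (\bigcup_(i in D) F i) x -> D i /\ F i x.
  move=> x; have [[i Di Fix]|nx] := pselect ((\bigcup_(i in D) F i) x).
    by exists i.
  by exists i0 => /nx.
have /choice[f fP] : forall i, exists f : T -> U,
    D i -> set_fun (F i) C f /\ set_inj (F i) f.
  move=> i; have [Di|nDi] := pselect (D i); last by exists (fun=> u0).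
  by have [f ? ?] := (card_le_injP u0 _ _).1 (FC i Di); exists f.
apply: card_le_trans CC; apply: card_le_trans (card_le_setX DC (card_lexx C)).
apply: (card_le_inj (f := fun x => (idx x, f (idx x) x))).
  by move=> x /idxP[Di Fx]; split => //; exact: (fP _ Di).1.
move=> x y /set_mem/idxP[Dx Fx] /set_mem/idxP[Dy Fy] [iE fE].
rewrite -iE in fE Fy.
exact: (fP _ Dx).2 x y (mem_set Fx) (mem_set Fy) fE.
Qed.

Lemma card_setU_le T U (A B : set T) (C : set U) :
  infinite_set C -> C `*` C #<= C -> A #<= C -> B #<= C -> A `|` B #<= C.
Proof.
move=> Cinf CC AC BC.
have -> : A `|` B = \bigcup_(b in [set: bool]) (if b then A else B).
  apply/seteqP; split => [x [Ax|Bx]|x [[] _ ?]]; by [exists true|exists false|left|right].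
apply: card_bigcup_le => //; last by case.
exact: finite_card_le_infinite finite_finset Cinf.
Qed.

(* [G] is the graph of a bijection from [D `*` D] onto [D], where [D = snd @` G]. *)
Definition pairing_graph T (G : set ((T * T) * T)) :=
  matching (snd @` G `*` snd @` G) (snd @` G) G /\ snd @` G `*` snd @` G `<=` fst @` G.

Lemma pairing_graph_bigcup T (F : set (set ((T * T) * T))) :
  F `<=` @pairing_graph T -> total_on F subset -> pairing_graph (\bigcup_(G in F) G).
Proof.
move=> Fpair Ftot; set U := \bigcup_(G in F) G.
have sndU G : F G -> snd @` G `<=` snd @` U.
  by move=> FG; apply: image_subset => q Gq; exists G.
split; first split.
- move=> q [G FG Gq]; have [[Gsub _] _] := Fpair G FG.
  by have [[? ?] ?] := Gsub q Gq; split; [split|]; exact: sndU FG _ _.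
- move=> a a' b b' Uab Uab'; have [G FG [Gab Gab']] := chain_bigcup_common Ftot Uab Uab'.
  exact: (Fpair G FG).1.2.
- move=> [x y] /= [[qx Uqx <-] [qy Uqy <-]].
  have [G FG [Gqx Gqy]] := chain_bigcup_common Ftot Uqx Uqy.
  have [p Gp <-] := (Fpair G FG).2 (qx.2, qy.2) (conj (imageP _ Gqx) (imageP _ Gqy)).
  by exists p => //; exists G.
Qed.

Lemma pairing_graph_card_le T (G : set ((T * T) * T)) :
  pairing_graph G -> snd @` G `*` snd @` G #<= snd @` G.
Proof.
move=> [Gm Gtot]; apply: matching_card_le Gm _ => p /Gtot[q Gq <-].
by exists q.2; case: q Gq.
Qed.

Lemma pairing_graph_nat T (X : set T) : infinite_set X ->
  exists G, [/\ pairing_graph G, snd @` G `<=` X & infinite_set (snd @` G)].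
Proof.
move=> Xinf; have [t0 _] := infinite_setN0 Xinf.
have [e eX /in2TT einj] := (card_le_injP t0 _ _).1 ((infiniteP X).1 Xinf).
have [code [_ /in2TT code_inj code_surj]] := (card_eq_bijP 0%N _ _).1 card_nat2.
pose G := (fun ij : nat * nat => ((e ij.1, e ij.2), e (code ij))) @` setT.
have sndG : snd @` G = range e.
  apply/seteqP; split => [_ [_ [ij _ <-] <-]|_ [n _ <-]]; first exact: imageP.
  have [ij _ <-] := code_surj n I.
  by exists ((e ij.1, e ij.2), e (code ij)); first exists ij.
exists G; rewrite /pairing_graph sndG; split.
- split; first split.
  + by move=> _ [ij _ <-] /=; split; [split|]; exact: imageP.
  + move=> a a' b b' [ij _ [<- <-]] [ij' _ [<- <-]].
    split => [[/einj E1 /einj E2]|/einj/code_inj E]; last by rewrite E.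
    by rewrite (surjective_pairing ij) (surjective_pairing ij') E1 E2.
  + move=> [_ _] /= [[i _ <-] [j _ <-]].
    by exists ((e i, e j), e (code (i, j))); first exists (i, j).
- by move=> _ [n _ <-]; exact: eX.
- apply/infiniteP; rewrite (card_le_eqr (inj_card_eq (in2W einj))).
  exact: card_lexx.
Qed.

Lemma card_setXUD T (D B : set T) :
  infinite_set D -> D `*` D #<= D -> B #= D -> B `<=` ~` D ->
  (D `|` B) `*` (D `|` B) `\` D `*` D #= B.
Proof.
move=> Dinf DD BD BnD; have [BleD DleB] := (card_eqPle B D).1 BD.
have XleD A' B' : A' #<= D -> B' #<= D -> A' `*` B' #<= D.
  by move=> AD BD'; exact: card_le_trans (card_le_setX AD BD') DD.
apply: Cantor_Bernstein.
  apply: card_le_trans DleB.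
  apply: (@card_le_trans _ _ _ (D `*` B `|` B `*` D `|` B `*` B)).
    by apply: subset_card_le => -[x y] [[[Dx|Bx] [Dy|By]] /= nDD];
      by [case: nDD|left; left|left; right|right].
  by rewrite !(card_setU_le Dinf DD) ?XleD.
apply: (card_le_inj (f := fun b => (b, b))) => [b Bb|b b' _ _ [] //].
by split; [split; right|case=> /BnD].
Qed.

Lemma pairing_graph_extend T (G : set ((T * T) * T)) (B : set T) :
  pairing_graph G -> infinite_set (snd @` G) -> B #= snd @` G -> B `<=` ~` snd @` G ->
  exists2 G', G `<` G' & pairing_graph G' /\ snd @` G' = snd @` G `|` B.
Proof.
move=> Gpair Dinf BD BnD; set D := snd @` G.
have [[Gsub Gmatch] Gtot] := Gpair.
have DD : D `*` D #<= D := pairing_graph_card_le Gpair.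
have [_ DleB] := (card_eqPle B D).1 BD.
set E := (D `|` B) `*` (D `|` B) `\` D `*` D.
have EB : E #= B := card_setXUD Dinf DD BD BnD.
have [t0 _] := infinite_setN0 Dinf.
have [h [hE hinj hsurj]] := (card_eq_bijP t0 _ _).1 EB.
pose G' := G `|` (fun p => (p, h p)) @` E.
have sndG' : snd @` G' = D `|` B.
  rewrite image_setU image_comp; congr (_ `|` _).
  apply/seteqP; split => [_ [p Ep <-]|b /hsurj[p Ep <-]]; [exact: hE|exact: imageP].
have GD p z : G (p, z) -> D p.1 /\ D p.2 /\ D z.
  by move=> /Gsub[[? ?] ?].
have EnD p : E p -> ~ (D p.1 /\ D p.2) by case.
exists G'; last split; last by [].
- split => [q Gq|G'G]; first by left.
  have [b Bb] : B !=set0 by apply: card_le_neq0 DleB (infinite_setN0 Dinf).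
  have Ebb : E (b, b) by split; [split; right|case=> /BnD].
  by have /GD[/(BnD _ Bb)] := G'G _ (or_intror (imageP _ Ebb)).
have mixed a b q : G (a, b) -> E q -> a <> q /\ b <> h q.
  move=> /GD[Da1 [Da2 Db]] Eq; split => [aq|bq]; first by case: (EnD q Eq); rewrite -aq.
  by apply: (BnD _ (hE _ Eq)); rewrite -bq.
rewrite /pairing_graph sndG'; split; first split.
- move=> [p z] [/GD[Dp1 [Dp2 Dz]]|[q Eq [<- <-]]]; first by split; [split; left|left].
  by split; [exact: Eq.1|right; exact: hE].
- move=> a a' b b' [Gab|[q Eq [<- <-]]] [Gab'|[q' Eq' [<- <-]]].
  + exact: Gmatch.
  + by have [na nb] := mixed _ _ _ Gab Eq'; split.
  + by have [na nb] := mixed _ _ _ Gab' Eq; split => /esym.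
  + by split => [->//|]; apply: hinj; rewrite inE.
- move=> p Dp; have [DDp|nDDp] := pselect ((D `*` D) p).
    by have [q Gq <-] := Gtot p DDp; exists q => //; left.
  by exists (p, h p) => //; right; exists p.
Qed.

Theorem hessenberg T (X : set T) : infinite_set X -> X `*` X #<= X.
Proof.
move=> Xinf.
(* Finite domains are excluded so that [pairing_graph_extend] applies to a maximal graph. *)
pose P G := [/\ pairing_graph G, snd @` G `<=` X &
  snd @` G = set0 \/ infinite_set (snd @` G)].
have [G [[Gpair GX Gdom] Gmax]] : exists G, P G /\ forall G', G `<` G' -> ~ P G'.
  apply: Zorn_bigcup => F FP Ftot; split.
  - by apply: pairing_graph_bigcup Ftot => G /FP[].
  - by rewrite image_bigcup => x [G /FP[_ GX _] /GX].
  - have [[G FG Ginf]|nF] := pselect (exists2 G, F G & infinite_set (snd @` G)).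
      by right; apply: sub_infinite_set Ginf; apply: image_subset; exact: bigcup_sup.
    left; rewrite image_bigcup; apply/seteqP; split => // x [G FG].
    by have [_ _ [->//|Ginf]] := FP G FG; case: nF; exists G.
set D := snd @` G.
have Dinf : infinite_set D.
  case: Gdom => // /image_set0_set0 G0.
  have [G' [G'pair G'X G'inf]] := pairing_graph_nat Xinf.
  exfalso; apply: (Gmax G'); last by split; last right.
  rewrite G0; split => // G'0.
  by have [_ [q G'q _]] := infinite_setN0 G'inf; exact: G'0 q G'q.
have XDleD : X `\` D #<= D.
  have [//|/card_subP[B BD BXD]] := card_le_total (X `\` D) D.
  have BnD : B `<=` ~` D by move=> b /BXD[].
  have [G' GG' [G'pair G'D]] := pairing_graph_extend Gpair Dinf BD BnD.
  exfalso; apply: (Gmax G' GG'); split => //; rewrite G'D.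
    by move=> x [/GX|/BXD[]].
  by right; apply: sub_infinite_set Dinf => x Dx; left.
have XleD : X #<= D.
  rewrite -(setDUK GX); apply: card_setU_le => //; exact: pairing_graph_card_le.
apply: card_le_trans (card_le_setX XleD XleD) _.
exact: card_le_trans (pairing_graph_card_le Gpair) (subset_card_le GX).
Qed.


Section successor_cardinal.
Variables (L K : Type) (lt : K -> K -> Prop).
Hypothesis L_infinite : infinite_set [set: L].
Hypothesis lt_total : forall a b, [\/ lt a b, a = b | lt b a].
Hypothesis K_large : ~ ([set: K] #<= [set: L]).
Hypothesis seg_small : forall b, [set a | lt a b] #<= [set: L].

Lemma closed_seg_small b : [set a | ~ lt b a] #<= [set: L].
Proof.
apply: (@card_le_trans _ _ _ ([set a | lt a b] `|` [set b])).
  by apply: subset_card_le => a nba; case: (lt_total a b) => [?|->|//]; [left|right].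
apply: card_setU_le => //; first exact: hessenberg.
exact: finite_card_le_infinite (finite_set1 b) L_infinite.
Qed.

Lemma small_bounded M (tau : M -> K) :
  [set: M] #<= [set: L] -> exists eps, forall m, lt (tau m) eps.
Proof.
move=> M_small; apply: contrapT => unbounded; apply: K_large.
have -> : [set: K] = \bigcup_(m in [set: M]) [set a | ~ lt (tau m) a].
  apply/seteqP; split => // y _; apply: contrapT => ny; apply: unbounded.
  by exists y => m; apply: contrapT => nlt; apply: ny; exists m.
apply: card_bigcup_le => //; first exact: hessenberg.
by move=> m _; exact: closed_seg_small.
Qed.

Lemma large_card_eq (F : set K) : ~ (F #<= [set: L]) -> F #= [set: K].
Proof.
move=> F_large; apply: Cantor_Bernstein; first exact: card_leT.
have F_infinite : infinite_set F.
  by move=> /finite_card_le_infinite-/(_ _ _ L_infinite).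
have L_le_F : [set: L] #<= F by case: (card_le_total F [set: L]).
have -> : [set: K] = \bigcup_(b in F) [set a | ~ lt b a].
  apply/seteqP; split => // y _; apply: contrapT => ny; apply: F_large.
  apply: card_le_trans (seg_small y); apply: subset_card_le => b Fb.
  by apply: contrapT => nlt; apply: ny; exists b.
apply: card_bigcup_le => //; first exact: hessenberg.
by move=> b _; exact: card_le_trans (closed_seg_small b) L_le_F.
Qed.

Lemma large_fiber (B : set K) (f : K -> L) :
  ~ (B #<= [set: L]) -> exists i, ~ (B `&` f @^-1` [set i] #<= [set: L]).
Proof.
move=> B_large; apply: contrapT => small_fibers; apply: B_large.
have -> : B = \bigcup_(i in [set: L]) (B `&` f @^-1` [set i]).
  by apply/seteqP; split => [b Bb|b [i _ []//]]; exists (f b).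
apply: card_bigcup_le => //; first exact: hessenberg.
by move=> i _; apply: contrapT => ni; apply: small_fibers; exists i.
Qed.

Lemma large_above (B : set K) eps :
  B #= [set: K] -> ~ (B `&` [set b | lt eps b] #<= [set: L]).
Proof.
move=> BK small_above; apply: K_large; rewrite -(card_le_eql BK).
apply: (@card_le_trans _ _ _ ((B `&` [set b | lt eps b]) `|` [set a | ~ lt eps a])).
  by apply: subset_card_le => b Bb; have [?|?] := pselect (lt eps b); [left|right].
apply: card_setU_le => //; first exact: hessenberg.
exact: closed_seg_small.
Qed.

Variables (pair : L * L -> L) (code : K -> K -> L) (c : K -> K -> L).
Hypothesis pair_inj : injective pair.
Hypothesis code_inj : forall b, set_inj [set a | lt a b] (code b).

Definition unpair : L -> L * L := 'pinv_(fun z => (z, z)) [set: L * L] pair.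
Definition decode (b : K) : L -> K := 'pinv_(fun=> b) [set a | lt a b] (code b).
Definition cplus (a b : K) : K := let: (i, j) := unpair (c a b) in decode (decode b i) j.

Lemma unpairK : cancel pair unpair.
Proof. by move=> q; rewrite /unpair pinvKV ?inE //; exact: in2W. Qed.

Lemma codeK b a : lt a b -> decode b (code b a) = a.
Proof. by move=> ab; rewrite /decode pinvKV ?inE //; exact: code_inj. Qed.

Lemma cplusE a b eps x :
  lt eps b -> lt x eps -> c a b = pair (code b eps, code eps x) -> cplus a b = x.
Proof. by move=> eps_b x_eps cE; rewrite /cplus cE unpairK !codeK. Qed.

Lemma cplus_recolors (B : set K) M (tau : M -> K) :
  B #= [set: K] -> [set: M] #<= [set: L] ->
  exists F (tau' : M -> L), [/\ F #= [set: K], F `<=` B &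
    forall a b m, F b -> c a b = tau' m -> cplus a b = tau m].
Proof.
move=> BK M_small; have [eps tau_eps] := small_bounded tau M_small.
have [i fiber_large] := large_fiber (fun b => code b eps) (large_above (eps := eps) BK).
exists (B `&` [set b | lt eps b] `&` (fun b => code b eps) @^-1` [set i]).
exists (fun m => pair (i, code eps (tau m))); split.
- exact: large_card_eq.
- by move=> b [[]].
- by move=> a b m [[_ eps_b] /= <-] cE; exact: cplusE eps_b (tau_eps m) cE.
Qed.

Lemma cplus_witnesses_sq M (p : K -> K -> M) :
  [set: M] #<= [set: L] -> witnesses_sq lt p c -> witnesses_sq lt p cplus.
Proof.
move=> M_small c_wit A AK tau.
have [F [tau' [FK FA tau'E]]] := cplus_recolors tau AK M_small.
have [a [b [Fa Fb ab cE]]] := c_wit F FK tau'.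
by exists a, b; split; [exact: FA|exact: FA|done|exact: tau'E cE].
Qed.

Lemma cplus_witnesses_circ M X (p : K -> K -> M) :
  [set: M] #<= [set: L] -> witnesses_circ X lt p c -> witnesses_circ X lt p cplus.
Proof.
move=> M_small c_wit A B AX BK tau.
have [F [tau' [FK FB tau'E]]] := cplus_recolors tau BK M_small.
have [a [b [Aa Fb ab cE]]] := c_wit A F AX FK tau'.
by exists a, b; split; [done|exact: FB|done|exact: tau'E cE].
Qed.

End successor_cardinal.

Theorem proposition3p2
  (L : Type) (Linf : ~ finite_set [set: L])
  (K : Type) (lt : K -> K -> Prop) (HK : is_successor_ordinal_of L lt)
  (c : K -> K -> L) :
  exists cplus : K -> K -> K,
    forall (M : Type), card_le [set: M] [set: L] ->
    forall p : K -> K -> M,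
      (witnesses_sq lt p c -> witnesses_sq lt p cplus) /\
      (forall X : Type, witnesses_circ X lt p c -> witnesses_circ X lt p cplus).
Proof.
case: HK => -[_ _ _ lt_total] K_large seg_small.
have [l0 _] := infinite_setN0 Linf.
have := hessenberg Linf; rewrite setXTT => /(card_le_injP l0)[pair _ /in2TT pair_inj].
have /choice[code code_inj] :
    forall b, exists code : K -> L, set_inj [set a | lt a b] code.
  by move=> b; have [f _ ?] := (card_le_injP l0 _ _).1 (seg_small b); exists f.
exists (cplus lt pair code c) => M M_small p; split.
  exact: cplus_witnesses_sq.
by move=> X; exact: cplus_witnesses_circ.
Qed.
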